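(* Let $\{q_k:k\ge0\}$ be a non-decreasing sequence of nonnegative numbers with $q_0>0$ satisfying $\frac{q_{n-1}}{Q_n}=O(1/n)$ as $n\to\infty$. There is a constant $c>0$ such that for all $N\in\mathbb N$ and all $n\ge M_N$: (i) if $x\in I_N^{k,l}$ with $0\le k\le N-2$ and $k+1\le l\le N-1$, then $$\int_{I_N}|F_n(x-t)|\,d\mu(t)\le\frac{cM_lM_k}{nM_N};$$ (ii) if $x\in I_N^{k,N}$ with $0\le k\le N-1$, then $$\int_{I_N}|F_n(x-t)|\,d\mu(t)\le\frac{cM_k}{M_N}.$$
   Context: Let $m=(m_0,m_1,\dots)$ be a bounded sequence of integers $m_k\ge 2$; $G_m=\prod_k Z_{m_k}$ (a compact abelian group under coordinatewise addition mod $m_k$) with Haar probability measure $\mu$; $M_0=1$, $M_{k+1}=m_kM_k$, $n=\sum_j n_jM_j$ with $n_j\in Z_{m_j}$. $I_N=\{x: x_0=\dots=x_{N-1}=0\}$. For $0\le k<l<N$, $I_N^{k,l}$ is the set of $x\in G_m$ with $x_0=\dots=x_{k-1}=0$, $x_k\ne0$, $x_{k+1}=\dots=x_{l-1}=0$, $x_l\ne0$ (other coordinates arbitrary); for $0\le k<N$, $I_N^{k,N}$ is the set of $x$ with $x_0=\dots=x_{k-1}=0$, $x_k\ne 0$, $x_{k+1}=\dots=x_{N-1}=0$. $r_k(x)=\exp(2\pi i x_k/m_k)$, $\psi_n=\prod_k r_k^{n_k}$, $D_n=\sum_{k=0}^{n-1}\psi_k$. $Q_n=\sum_{k=0}^{n-1}q_k$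 and $F_n=\frac1{Q_n}\sum_{k=1}^nq_{n-k}D_k$. *)

From Stdlib Require Import Reals Arith.
Open Scope R_scope.

Fixpoint sumR (n : nat) (f : nat -> R) : R :=
  match n with O => 0 | S n' => sumR n' f + f n' end.

Fixpoint Mseq (m : nat -> nat) (k : nat) : nat :=
  match k with O => 1%nat | S k' => (m k' * Mseq m k')%nat end.

Definition digit (m : nat -> nat) (n j : nat) : nat :=
  ((n / Mseq m j) mod (m j))%nat.

Definition inG (m : nat -> nat) (x : nat -> nat) : Prop := forall k, (x k < m k)%nat.

Definition subG (m : nat -> nat) (x t : nat -> nat) : nat -> nat :=
  fun k => ((x k + (m k - t k)) mod (m k))%nat.

(* psi_n(x) = prod_k r_k(x)^{n_k} = exp(2 pi i sum_k n_k x_k / m_k).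
   n_k = 0 for k > n (as M_k >= 2^k > n when all m_j >= 2), so the sum is finite. *)
Definition theta (m : nat -> nat) (n : nat) (x : nat -> nat) : R :=
  2 * PI * sumR (S n) (fun j => INR (digit m n j * x j) / INR (m j)).
Definition psi_re m n x : R := cos (theta m n x).
Definition psi_im m n x : R := sin (theta m n x).

Definition D_re m n x : R := sumR n (fun k => psi_re m k x).
Definition D_im m n x : R := sumR n (fun k => psi_im m k x).

Definition Qs (q : nat -> R) (n : nat) : R := sumR n q.

Definition F_re m q n x : R :=
  / Qs q n * sumR n (fun i => q (n - S i)%nat * D_re m (S i) x).
Definition F_im m q n x : R :=
  / Qs q n * sumR n (fun i => q (n - S i)%nat * D_im m (S i) x).
Definition F_abs m q n x : R := sqrt (F_re m q n x ^ 2 + F_im m q n x ^ 2).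

(* sumcyl m j cnt g = sum of g t over all t with t_i ranging over Z_{m_i}
   for j <= i < j+cnt and t_i = 0 for all other i. *)
Fixpoint sumcyl (m : nat -> nat) (j cnt : nat) (g : (nat -> nat) -> R) : R :=
  match cnt with
  | O => g (fun _ => 0%nat)
  | S c => sumR (m j) (fun a =>
             sumcyl m (S j) c (fun t => g (fun i => if Nat.eqb i j then a else t i)))
  end.

(* Haar integral over I_N of a function depending only on coordinates < K
   (K >= N): each cylinder {t : t_0..t_{K-1} fixed} has Haar measure 1/M_K. *)
Definition int_IN (m : nat -> nat) (N K : nat) (f : (nat -> nat) -> R) : R :=
  / INR (Mseq m K) * sumcyl m N (K - N) f.

(* int_{I_N} |F_n(x - t)| dmu(t).  For k < n <= M_{N+n}, psi_k depends only on
   coordinates < N+n, hence so does t |-> F_n(x-t). *)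
Definition intF (m : nat -> nat) (q : nat -> R) (N n : nat) (x : nat -> nat) : R :=
  int_IN m N (N + n) (fun t => F_abs m q n (subG m x t)).

Definition I_kl (k l : nat) (x : nat -> nat) : Prop :=
  (forall j, (j < k)%nat -> x j = 0%nat) /\ x k <> 0%nat /\
  (forall j, (k < j)%nat -> (j < l)%nat -> x j = 0%nat) /\ x l <> 0%nat.

Definition I_kN (N k : nat) (x : nat -> nat) : Prop :=
  (forall j, (j < k)%nat -> x j = 0%nat) /\ x k <> 0%nat /\
  (forall j, (k < j)%nat -> (j < N)%nat -> x j = 0%nat).

From Stdlib Require Import Reals Arith Lia Lra.
From Coquelicot Require Import Coquelicot.
Open Scope R_scope.

(* For [a < M_s] the characters factor as [psi_(w M_s + a) = psi_(w M_s) psi_a], and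
   [sum_(v < m_s) psi_(v M_s)(y) = 0] when [y_s <> 0].  Hence if [y_k <> 0] the Dirichlet kernel
   vanishes at every [M_s] with [s > k], so [D_j(y)] only depends on [j mod M_(k+1)] and
   [|D_j(y)| <= M_(k+1)]; if moreover [y_l <> 0] with [l > k], the same argument applied to
   [D] itself gives [|sum_(i<j) D_i(y)| <= M_(l+1) M_(k+1)].  Abel summation against the
   non-increasing weights [q_(n-1-i)] then bounds [|F_n(y)|] by [M_(k+1)] and by
   [q_(n-1)/Q_n M_(l+1) M_(k+1)]; as [m] is bounded and [q_(n-1)/Q_n = O(1/n)], these are
   [O(M_k)] and [O(M_l M_k / n)].  Finally, for [t] in [I_N] the point [x - t] has the same
   digits as [x] below [N], and [I_N] has measure [1/M_N]. *)

Lemma sumR_ext n f g : (forall i, (i < n)%nat -> f i = g i) -> sumR n f = sumR n g.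
Proof.
  induction n as [|n IH]; intros H; simpl; auto.
  rewrite IH by (intros; apply H; lia); rewrite H by lia; reflexivity.
Qed.

Lemma sumR_le n f g : (forall i, (i < n)%nat -> f i <= g i) -> sumR n f <= sumR n g.
Proof.
  induction n as [|n IH]; intros H; simpl; [lra|].
  apply Rplus_le_compat; [apply IH; intros|]; apply H; lia.
Qed.

Lemma sumR_const n c : sumR n (fun _ => c) = INR n * c.
Proof. induction n as [|n IH]; simpl sumR; [simpl; ring|]. rewrite IH, S_INR; ring. Qed.

Lemma sumR_scal n c f : sumR n (fun i => c * f i) = c * sumR n f.
Proof. induction n as [|n IH]; simpl; [ring|]. rewrite IH; ring. Qed.

Lemma sumR_plus n f g : sumR n (fun i => f i + g i) = sumR n f + sumR n g.
Proof. induction n as [|n IH]; simpl; [ring|]. rewrite IH; ring. Qed.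

Lemma sumR_succ_l n f : sumR (S n) f = f 0%nat + sumR n (fun i => f (S i)).
Proof.
  induction n as [|n IH]; [simpl; ring|].
  change (sumR (S (S n)) f) with (sumR (S n) f + f (S n)); rewrite IH; simpl; ring.
Qed.

Lemma sumR_rev n f : sumR n (fun i => f (n - S i)%nat) = sumR n f.
Proof.
  induction n as [|n IH]; [reflexivity|].
  rewrite sumR_succ_l; replace (S n - 1)%nat with n by lia; simpl; rewrite IH; ring.
Qed.

Lemma sumR_zero_tail n L f : (n <= L)%nat ->
  (forall j, (n <= j < L)%nat -> f j = 0) -> sumR L f = sumR n f.
Proof.
  induction L as [|L IH]; intros HnL Hz; [now replace n with 0%nat by lia|].
  destruct (Nat.eq_dec n (S L)) as [->|]; [reflexivity|].
  simpl; rewrite Hz, IH by (intros; try apply Hz; lia); ring.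
Qed.

Lemma sumR_indicator L s g : (s < L)%nat ->
  sumR L (fun j => if Nat.eqb j s then g else 0) = g.
Proof.
  intros HsL.
  assert (Hoff : forall j, j <> s -> (if Nat.eqb j s then g else 0) = 0)
    by (intros j Hj; apply Nat.eqb_neq in Hj; rewrite Hj; reflexivity).
  rewrite (sumR_zero_tail (S s)) by (lia || intros; apply Hoff; lia).
  simpl; rewrite Nat.eqb_refl, (sumR_zero_tail 0) by (lia || intros; apply Hoff; lia).
  simpl; ring.
Qed.

Fixpoint sumC (n : nat) (f : nat -> C) : C :=
  match n with O => 0%C | S n' => (sumC n' f + f n')%C end.

Lemma sumC_ext n f g : (forall i, (i < n)%nat -> f i = g i) -> sumC n f = sumC n g.
Proof.
  induction n as [|n IH]; intros H; simpl; auto.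
  rewrite IH by (intros; apply H; lia); rewrite H by lia; reflexivity.
Qed.

Lemma sumC_fst n f : fst (sumC n f) = sumR n (fun i => fst (f i)).
Proof. induction n as [|n IH]; simpl; auto. rewrite IH; auto. Qed.

Lemma sumC_snd n f : snd (sumC n f) = sumR n (fun i => snd (f i)).
Proof. induction n as [|n IH]; simpl; auto. rewrite IH; auto. Qed.

Lemma sumC_add n p f : sumC (n + p) f = (sumC n f + sumC p (fun a => f (n + a)%nat))%C.
Proof.
  induction p as [|p IH]; [rewrite Nat.add_0_r; simpl; ring|].
  rewrite Nat.add_succ_r; simpl; rewrite IH; ring.
Qed.

Lemma sumC_blocks w P f :
  sumC (w * P) f = sumC w (fun v => sumC P (fun a => f (v * P + a)%nat)).
Proof.
  induction w as [|w IH]; [reflexivity|].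
  change (S w * P)%nat with (P + w * P)%nat.
  rewrite Nat.add_comm, sumC_add, IH; reflexivity.
Qed.

Lemma sumC_scal_l n z f : sumC n (fun i => z * f i)%C = (z * sumC n f)%C.
Proof. induction n as [|n IH]; simpl; [ring|]. rewrite IH; ring. Qed.

Lemma sumC_scal_r n z f : sumC n (fun i => f i * z)%C = (sumC n f * z)%C.
Proof. induction n as [|n IH]; simpl; [ring|]. rewrite IH; ring. Qed.

Lemma sumC_telescope n f : sumC n (fun i => f (S i) - f i)%C = (f n - f 0%nat)%C.
Proof. induction n as [|n IH]; simpl; [ring|]. rewrite IH; ring. Qed.

Lemma Cmod_sumC n f : Cmod (sumC n f) <= sumR n (fun i => Cmod (f i)).
Proof.
  induction n as [|n IH]; simpl; [rewrite Cmod_0; lra|].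
  eapply Rle_trans; [apply Cmod_triangle|lra].
Qed.

Lemma Cmod_sumC_le n f K : (forall i, (i < n)%nat -> Cmod (f i) <= K) ->
  Cmod (sumC n f) <= INR n * K.
Proof.
  intros H; rewrite <- sumR_const.
  eapply Rle_trans; [apply Cmod_sumC|apply sumR_le; auto].
Qed.

Lemma Cmod_RtoC_mult r z : Cmod (RtoC r * z) = Rabs r * Cmod z.
Proof. rewrite Cmod_mult, Cmod_R; reflexivity. Qed.

Lemma sumC_geometric_period (w : nat -> C) (z : C) n : z <> 1%C ->
  (forall c, w (S c) = (w c * z)%C) -> w n = w 0%nat -> sumC n w = 0%C.
Proof.
  intros Hz Hstep Hper.
  assert (Hz1 : (z - 1)%C <> 0%C) by (intros E; apply Hz;
    replace z with ((z - 1) + 1)%C by ring; rewrite E; ring).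
  assert (E : (sumC n w * (z - 1))%C = 0%C).
  { rewrite <- sumC_scal_r, (sumC_ext _ _ (fun c => w (S c) - w c)%C).
    - rewrite sumC_telescope, Hper; ring.
    - intros c _; rewrite Hstep; ring. }
  replace (sumC n w) with (sumC n w * (z - 1) / (z - 1))%C by (field; auto).
  rewrite E; field; auto.
Qed.

Section MixedRadix.
Variable m : nat -> nat.
Hypothesis Hm2 : forall k, (2 <= m k)%nat.

Lemma Mseq_pos j : (1 <= Mseq m j)%nat.
Proof. induction j; simpl; auto. specialize (Hm2 j); nia. Qed.

Lemma Mseq_gt j : (j < Mseq m j)%nat.
Proof. induction j; simpl; auto. specialize (Hm2 j); nia. Qed.

Lemma Mseq_divide j s : (j <= s)%nat -> Nat.divide (Mseq m j) (Mseq m s).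
Proof.
  induction 1 as [|s _ IH]; [apply Nat.divide_refl|].
  simpl; apply Nat.divide_mul_r; exact IH.
Qed.

Lemma digit_small u j : (u < Mseq m j)%nat -> digit m u j = 0%nat.
Proof. intros H; unfold digit; rewrite Nat.div_small by exact H; apply Nat.Div0.mod_0_l. Qed.

Lemma digit_add a s v j : (a < Mseq m s)%nat ->
  digit m (a + Mseq m s * v) j = (digit m a j + digit m (Mseq m s * v) j)%nat.
Proof.
  intros Ha; unfold digit; pose proof (Mseq_pos j); pose proof (Mseq_pos s).
  destruct (Nat.lt_ge_cases j s) as [Hjs|Hjs].
  - destruct (Mseq_divide (S j) s Hjs) as [R HR]; simpl in HR; rewrite HR.
    replace (a + R * (m j * Mseq m j) * v)%nat with (a + R * v * m j * Mseq m j)%nat by ring.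
    replace (R * (m j * Mseq m j) * v)%nat with (R * v * m j * Mseq m j)%nat by ring.
    rewrite Nat.div_add, Nat.div_mul, Nat.Div0.mod_add, Nat.Div0.mod_mul by lia; lia.
  - destruct (Mseq_divide s j Hjs) as [R HR].
    assert (R <> 0%nat) by (intros ->; simpl in HR; lia).
    rewrite HR, (Nat.div_small a) by nia; rewrite Nat.Div0.mod_0_l.
    rewrite (Nat.mul_comm R), <- !Nat.Div0.div_div.
    rewrite (Nat.mul_comm _ v), Nat.div_add, Nat.div_mul, (Nat.div_small a) by lia; reflexivity.
Qed.

Lemma digit_single s c j : (c < m s)%nat ->
  digit m (Mseq m s * c) j = if Nat.eqb j s then c else 0%nat.
Proof.
  intros Hc; unfold digit; pose proof (Mseq_pos j); pose proof (Mseq_pos s).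
  destruct (Nat.lt_total j s) as [Hjs|[<-|Hjs]].
  - destruct (Mseq_divide (S j) s Hjs) as [R HR]; simpl in HR; rewrite HR.
    replace (Nat.eqb j s) with false by (symmetry; apply Nat.eqb_neq; lia).
    replace (R * (m j * Mseq m j) * c)%nat with (R * c * m j * Mseq m j)%nat by ring.
    rewrite Nat.div_mul by lia; apply Nat.Div0.mod_mul.
  - rewrite Nat.eqb_refl, Nat.mul_comm, Nat.div_mul by lia; apply Nat.mod_small, Hc.
  - destruct (Mseq_divide (S s) j Hjs) as [R HR]; simpl in HR.
    replace (Nat.eqb j s) with false by (symmetry; apply Nat.eqb_neq; lia).
    assert (R <> 0%nat) by (intros ->; simpl in HR; lia).
    rewrite Nat.div_small; [apply Nat.Div0.mod_0_l|].
    rewrite HR; apply Nat.lt_le_trans with (m s * Mseq m s)%nat; nia.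
Qed.

End MixedRadix.

Definition cis (a : R) : C := (cos a, sin a).

Lemma cis_add a b : cis (a + b) = (cis a * cis b)%C.
Proof. unfold cis, Cmult; simpl; rewrite cos_plus, sin_plus; f_equal; ring. Qed.

Lemma Cmod_cis a : Cmod (cis a) = 1.
Proof.
  unfold Cmod, cis; cbn [fst snd]; rewrite <- sqrt_1; f_equal.
  rewrite <- (sin2_cos2 a); unfold Rsqr; ring.
Qed.

Lemma cis_period a k : cis (a + 2 * INR k * PI) = cis a.
Proof. unfold cis; rewrite cos_period, sin_period; reflexivity. Qed.

Lemma cis_neq_1 a : 0 < a < 2 * PI -> cis a <> 1%C.
Proof.
  intros Ha E; assert (Hcos : cos a = 1) by (injection E; auto).
  assert (Hsin : 0 < sin (a / 2)) by (apply sin_gt_0; lra).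
  replace a with (2 * (a / 2)) in Hcos by field; rewrite cos_2a_sin in Hcos; nra.
Qed.

Section Characters.
Variable m : nat -> nat.
Hypothesis Hm2 : forall k, (2 <= m k)%nat.
Variable y : nat -> nat.

Definition theta_upto L u := 2 * PI * sumR L (fun j => INR (digit m u j * y j) / INR (m j)).

Lemma theta_upto_eq L u : (S u <= L)%nat -> theta m u y = theta_upto L u.
Proof.
  intros HL; unfold theta, theta_upto; f_equal; symmetry; apply sumR_zero_tail; auto.
  intros j Hj; rewrite digit_small by (pose proof (Mseq_gt m Hm2 j); lia); simpl; lra.
Qed.

Lemma theta_add a s v : (a < Mseq m s)%nat ->
  theta m (a + Mseq m s * v) y = theta m a y + theta m (Mseq m s * v) y.
Proof.
  intros Ha; set (L := S (a + Mseq m s * v)).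
  rewrite !(theta_upto_eq L) by (unfold L; lia); unfold theta_upto.
  rewrite <- Rmult_plus_distr_l, <- sumR_plus; f_equal; apply sumR_ext; intros j _.
  rewrite digit_add, Nat.mul_add_distr_r, plus_INR by auto; lra.
Qed.

Lemma theta_single s c : (c < m s)%nat ->
  theta m (Mseq m s * c) y = 2 * PI * (INR c * INR (y s) / INR (m s)).
Proof.
  intros Hc; set (L := S (Mseq m s * c + s)).
  rewrite (theta_upto_eq L) by (unfold L; lia); unfold theta_upto; f_equal.
  rewrite <- (sumR_indicator L s) by (unfold L; lia); apply sumR_ext; intros j _.
  rewrite digit_single by auto.
  destruct (Nat.eqb_spec j s) as [->|]; [rewrite mult_INR; reflexivity|simpl; lra].
Qed.

Definition psiC u : C := cis (theta m u y).

Lemma Cmod_psiC u : Cmod (psiC u) = 1.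
Proof. apply Cmod_cis. Qed.

(* [psi_(v M_s)(y) = r_s(y)^v], and [r_s(y) <> 1] is an [m_s]-th root of unity. *)
Lemma sum_psiC_level s : (0 < y s < m s)%nat ->
  sumC (m s) (fun v => psiC (v * Mseq m s)) = 0%C.
Proof.
  intros Hy; set (phi := 2 * PI * (INR (y s) / INR (m s))).
  assert (Hm : 0 < INR (m s)) by (apply lt_0_INR; lia).
  assert (Hys : 0 < INR (y s) < INR (m s)) by (split; [apply lt_0_INR|apply lt_INR]; lia).
  rewrite (sumC_ext _ _ (fun v => cis (INR v * phi))).
  2:{ intros v Hv; unfold psiC; rewrite Nat.mul_comm, theta_single by exact Hv.
      unfold phi; f_equal; field; lra. }
  apply (sumC_geometric_period _ (cis phi)).
  - apply cis_neq_1; unfold phi; pose proof PI_RGT_0.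
    assert (0 < INR (y s) / INR (m s)) by (apply Rdiv_lt_0_compat; lra).
    assert (INR (y s) / INR (m s) < 1).
    { apply (Rmult_lt_reg_r (INR (m s))); [lra|].
      unfold Rdiv; rewrite Rmult_assoc, Rinv_l; lra. }
    nra.
  - intros v; rewrite <- cis_add, S_INR; f_equal; ring.
  - replace (INR (m s) * phi) with (0 + 2 * INR (y s) * PI) by (unfold phi; field; lra).
    rewrite cis_period; simpl; rewrite Rmult_0_l; reflexivity.
Qed.

Definition shift_law s (G : nat -> C) := forall w a, (a < Mseq m s)%nat ->
  G (w * Mseq m s + a)%nat = (psiC (w * Mseq m s) * G a)%C.

Lemma psiC_shift_law s : shift_law s psiC.
Proof.
  intros w a Ha; unfold psiC.
  rewrite Nat.add_comm, Nat.mul_comm, theta_add, cis_add by exact Ha; apply Cmult_comm.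
Qed.

Lemma sumC_shift_law s G : shift_law s G -> forall w b, (b <= Mseq m s)%nat ->
  sumC (w * Mseq m s + b) G =
  (sumC w (fun v => psiC (v * Mseq m s)) * sumC (Mseq m s) G + psiC (w * Mseq m s) * sumC b G)%C.
Proof.
  intros HG w b Hb; rewrite sumC_add, sumC_blocks, <- sumC_scal_r, <- sumC_scal_l; f_equal.
  - apply sumC_ext; intros v _; rewrite <- sumC_scal_l; apply sumC_ext; intros a Ha; auto.
  - apply sumC_ext; intros a Ha; apply HG; lia.
Qed.

Lemma sumC_next_level s G : shift_law s G ->
  sumC (Mseq m (S s)) G = (sumC (m s) (fun v => psiC (v * Mseq m s)) * sumC (Mseq m s) G)%C.
Proof.
  intros HG; simpl Mseq; rewrite <- (Nat.add_0_r (m s * Mseq m s)).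
  rewrite (sumC_shift_law s G HG) by lia; simpl; ring.
Qed.

Lemma shift_law_partial_sums s G : shift_law s G -> sumC (Mseq m s) G = 0%C ->
  shift_law s (fun i => sumC i G).
Proof.
  intros HG H0 w a Ha; rewrite (sumC_shift_law s G HG) by lia; rewrite H0; ring.
Qed.

(* Full periods contribute nothing and [|psi| = 1], so [|sum_(i<j) G| = |sum_(i < j mod M_s) G|]. *)
Lemma Cmod_sumC_periodic_le s G K : shift_law s G -> sumC (Mseq m s) G = 0%C ->
  (forall i, Cmod (G i) <= K) -> forall j, Cmod (sumC j G) <= INR (Mseq m s) * K.
Proof.
  intros HG H0 HK j; pose proof (Mseq_pos m Hm2 s) as HM.
  assert (Hr : (j mod Mseq m s < Mseq m s)%nat) by (apply Nat.mod_upper_bound; lia).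
  rewrite (Nat.div_mod_eq j (Mseq m s)), Nat.mul_comm, (sumC_shift_law s G HG) by lia.
  rewrite H0, Cmult_0_r, Cplus_0_l, Cmod_mult, Cmod_psiC, Rmult_1_l.
  assert (0 <= K) by (eapply Rle_trans; [apply Cmod_ge_0|apply (HK 0%nat)]).
  eapply Rle_trans; [apply Cmod_sumC_le; intros; apply HK|].
  apply Rmult_le_compat_r; [lra|apply le_INR; lia].
Qed.

Definition DC i := sumC i psiC.
Definition sumDC j := sumC j DC.

Lemma DC_level_zero k s : (0 < y k < m k)%nat -> (k < s)%nat -> DC (Mseq m s) = 0%C.
Proof.
  intros Hy Hks; induction Hks as [|s _ IH]; unfold DC in *;
    rewrite sumC_next_level by apply psiC_shift_law.
  - rewrite sum_psiC_level by exact Hy; ring.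
  - rewrite IH; ring.
Qed.

Lemma Cmod_DC_le k i : (0 < y k < m k)%nat -> Cmod (DC i) <= INR (Mseq m (S k)).
Proof.
  intros Hy; rewrite <- (Rmult_1_r (INR _)).
  apply (Cmod_sumC_periodic_le _ psiC); [apply psiC_shift_law| |intros; rewrite Cmod_psiC; lra].
  apply (DC_level_zero k); auto.
Qed.

Lemma Cmod_sumDC_le k l j : (0 < y k < m k)%nat -> (0 < y l < m l)%nat -> (k < l)%nat ->
  Cmod (sumDC j) <= INR (Mseq m (S l)) * INR (Mseq m (S k)).
Proof.
  intros Hk Hl Hkl.
  assert (HD : forall s, (k < s)%nat -> shift_law s DC)
    by (intros s Hs; apply shift_law_partial_sums, (DC_level_zero k); auto using psiC_shift_law).
  apply (Cmod_sumC_periodic_le _ DC); [auto| |intros; apply (Cmod_DC_le k); auto].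
  rewrite sumC_next_level by auto; rewrite sum_psiC_level by exact Hl; ring.
Qed.

End Characters.

(* Abel summation: the partial sums [sum_(i<p) a_i (U_(i+1) - U_i) - a_p U_p] change by
   [(a_p - a_(p+1)) U_(p+1)] from [p] to [p+1], and these weights telescope to [a_0 - a_p]. *)
Lemma Cmod_abel_sum_le (a : nat -> R) (U : nat -> C) K :
  (forall i, 0 <= a (S i) <= a i) -> (forall i, Cmod (U i) <= K) -> U 0%nat = 0%C ->
  forall n, Cmod (sumC n (fun i => a i * (U (S i) - U i))%C) <= a 0%nat * K.
Proof.
  intros Ha HU H0 n; set (P p := sumC p (fun i => a i * (U (S i) - U i))%C).
  assert (Hparts : forall p, Cmod (P p - a p * U p)%C <= (a 0%nat - a p) * K).
  { induction p as [|p IH].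
    - unfold P; simpl; rewrite H0.
      replace (0 - a 0%nat * 0)%C with (RtoC 0) by ring; rewrite Cmod_0; lra.
    - replace (P (S p) - a (S p) * U (S p))%C
        with ((P p - a p * U p) + RtoC (a p - a (S p)) * U (S p))%C
        by (unfold P; simpl; rewrite RtoC_minus; ring).
      eapply Rle_trans; [apply Cmod_triangle|]; rewrite Cmod_RtoC_mult.
      specialize (Ha p); specialize (HU (S p)); rewrite Rabs_pos_eq by lra.
      assert ((a p - a (S p)) * Cmod (U (S p)) <= (a p - a (S p)) * K)
        by (apply Rmult_le_compat_l; lra).
      lra. }
  assert (Han : 0 <= a n) by (destruct n; [specialize (Ha 0%nat)|specialize (Ha n)]; lra).
  change (Cmod (P n) <= a 0%nat * K).
  replace (P n) with ((P n - a n * U n) + RtoC (a n) * U n)%C by ring.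
  eapply Rle_trans; [apply Cmod_triangle|]; rewrite Cmod_RtoC_mult, Rabs_pos_eq by exact Han.
  specialize (Hparts n); assert (a n * Cmod (U n) <= a n * K) by (apply Rmult_le_compat_l; auto).
  lra.
Qed.

Section Fejer.
Variable m : nat -> nat.
Hypothesis Hm2 : forall k, (2 <= m k)%nat.
Variable q : nat -> R.
Hypothesis Hq0 : 0 < q 0%nat.
Hypothesis Hqnn : forall k, 0 <= q k.
Hypothesis Hqmon : forall k, q k <= q (S k).

Lemma q_le i j : (i <= j)%nat -> q i <= q j.
Proof. induction 1 as [|j _ IH]; [lra|specialize (Hqmon j); lra]. Qed.

Lemma Qs_pos n : (1 <= n)%nat -> 0 < Qs q n.
Proof.
  induction 1 as [|n _ IH]; unfold Qs in *; simpl; [lra|].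
  specialize (Hqnn n); lra.
Qed.

Definition FC n y : C := (RtoC (/ Qs q n) * sumC n (fun i => q (n - S i)%nat * DC m y (S i)))%C.

Lemma F_abs_Cmod n y : F_abs m q n y = Cmod (FC n y).
Proof.
  assert (Hmul : forall r (z : C), (RtoC r * z)%C = (r * fst z, r * snd z))
    by (intros r [a b]; unfold Cmult; simpl; f_equal; ring).
  unfold F_abs, Cmod, FC, F_re, F_im, D_re, D_im, DC, psiC, psi_re, psi_im.
  rewrite Hmul, sumC_fst, sumC_snd; cbn [fst snd].
  f_equal; f_equal; f_equal; f_equal; apply sumR_ext; intros i _;
    rewrite Hmul, ?sumC_fst, ?sumC_snd; reflexivity.
Qed.

Lemma F_abs_le_Mseq n y k : (1 <= n)%nat -> (0 < y k < m k)%nat ->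
  F_abs m q n y <= INR (Mseq m (S k)).
Proof.
  intros Hn Hy; pose proof (Qs_pos n Hn) as HQ.
  rewrite F_abs_Cmod; unfold FC; rewrite Cmod_RtoC_mult, Rabs_pos_eq
    by (left; apply Rinv_0_lt_compat; exact HQ).
  apply (Rmult_le_reg_l (Qs q n)); [exact HQ|]; rewrite <- Rmult_assoc, Rinv_r, Rmult_1_l by lra.
  eapply Rle_trans; [apply Cmod_sumC|].
  unfold Qs; rewrite <- (sumR_rev n q), Rmult_comm, <- sumR_scal; apply sumR_le; intros i _.
  rewrite Cmod_RtoC_mult, Rabs_pos_eq, Rmult_comm by apply Hqnn.
  apply Rmult_le_compat_r; [apply Hqnn|apply (Cmod_DC_le m Hm2 y k); exact Hy].
Qed.

Lemma F_abs_le_ratio n y k l : (1 <= n)%nat -> (0 < y k < m k)%nat -> (0 < y l < m l)%nat ->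
  (k < l)%nat ->
  F_abs m q n y <= q (n - 1)%nat / Qs q n * (INR (Mseq m (S l)) * INR (Mseq m (S k))).
Proof.
  intros Hn Hk Hl Hkl; pose proof (Qs_pos n Hn) as HQ.
  rewrite F_abs_Cmod; unfold FC; rewrite Cmod_RtoC_mult, Rabs_pos_eq
    by (left; apply Rinv_0_lt_compat; exact HQ).
  unfold Rdiv; rewrite (Rmult_comm (q _)), Rmult_assoc; apply Rmult_le_compat_l;
    [left; apply Rinv_0_lt_compat; exact HQ|].
  replace (n - 1)%nat with (n - S 0)%nat by lia.
  rewrite (sumC_ext _ _ (fun i => q (n - S i)%nat * (sumDC m y (S (S i)) - sumDC m y (S i)))%C)
    by (intros i _; unfold sumDC; simpl; ring).
  apply (Cmod_abel_sum_le (fun i => q (n - S i)%nat) (fun i => sumDC m y (S i))).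
  - intros i; split; [apply Hqnn|apply q_le; lia].
  - intros i; apply (Cmod_sumDC_le m Hm2 y k l); auto.
  - unfold sumDC, DC; simpl; ring.
Qed.

Variable B : nat.
Hypothesis HB : forall k, (m k <= B)%nat.

Lemma Mseq_succ_le k : INR (Mseq m (S k)) <= INR B * INR (Mseq m k).
Proof. simpl Mseq; rewrite mult_INR; apply Rmult_le_compat_r; [apply pos_INR|apply le_INR, HB]. Qed.

Lemma F_abs_le_one_digit c n y k : INR B <= c -> (1 <= n)%nat -> (0 < y k < m k)%nat ->
  F_abs m q n y <= c * INR (Mseq m k).
Proof.
  intros Hc Hn Hk; eapply Rle_trans; [apply (F_abs_le_Mseq n y k Hn Hk)|].
  eapply Rle_trans; [apply Mseq_succ_le|apply Rmult_le_compat_r; [apply pos_INR|exact Hc]].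
Qed.

Lemma F_abs_mul_le_small_n n0 n y k l : (n <= n0)%nat -> (1 <= n)%nat -> (0 < y k < m k)%nat ->
  F_abs m q n y * INR n <= INR B * INR n0 * (INR (Mseq m l) * INR (Mseq m k)).
Proof.
  intros Hn0 Hn Hk.
  assert (HMl : 1 <= INR (Mseq m l)) by (apply (le_INR 1), Mseq_pos, Hm2).
  assert (HF : 0 <= F_abs m q n y) by (rewrite F_abs_Cmod; apply Cmod_ge_0).
  assert (HBk : 0 <= INR B * INR (Mseq m k)) by (apply Rmult_le_pos; apply pos_INR).
  apply Rle_trans with (INR B * INR (Mseq m k) * INR n0).
  - apply Rmult_le_compat; [exact HF|apply pos_INR| |apply le_INR, Hn0].
    apply F_abs_le_one_digit; auto; lra.
  - rewrite <- (Rmult_1_r (INR B * INR (Mseq m k) * INR n0)).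
    replace (INR B * INR n0 * (INR (Mseq m l) * INR (Mseq m k)))
      with (INR B * INR (Mseq m k) * INR n0 * INR (Mseq m l)) by ring.
    apply Rmult_le_compat_l; [apply Rmult_le_pos; [|apply pos_INR]|]; lra.
Qed.

Lemma F_abs_mul_le_large_n C n y k l : Rabs (q (n - 1)%nat / Qs q n) <= C / INR n ->
  (1 <= n)%nat -> (0 < y k < m k)%nat -> (0 < y l < m l)%nat -> (k < l)%nat ->
  F_abs m q n y * INR n <= Rabs C * INR B ^ 2 * (INR (Mseq m l) * INR (Mseq m k)).
Proof.
  intros HC Hn Hk Hl Hkl.
  assert (Hnr : 0 < INR n) by (apply lt_0_INR; lia).
  set (r := q (n - 1)%nat / Qs q n) in *.
  assert (Hr : 0 <= r) by (apply Rdiv_le_0_compat; [apply Hqnn|apply Qs_pos; exact Hn]).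
  assert (Hrn : r * INR n <= Rabs C).
  { rewrite Rabs_pos_eq in HC by exact Hr.
    apply (Rmult_le_compat_r (INR n)) in HC; [|lra].
    replace (C / INR n * INR n) with C in HC by (field; lra).
    pose proof (Rle_abs C); lra. }
  set (MM := INR (Mseq m (S l)) * INR (Mseq m (S k))).
  assert (HMM0 : 0 <= MM) by (apply Rmult_le_pos; apply pos_INR).
  assert (HMM : MM <= INR B ^ 2 * (INR (Mseq m l) * INR (Mseq m k))) by
    (apply Rle_trans with (INR B * INR (Mseq m l) * (INR B * INR (Mseq m k)));
     [apply Rmult_le_compat; auto using pos_INR, Mseq_succ_le|right; ring]).
  apply Rle_trans with (r * INR n * MM).
  - replace (r * INR n * MM) with (r * MM * INR n) by ring.
    apply Rmult_le_compat_r; [lra|apply F_abs_le_ratio; auto].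
  - rewrite (Rmult_assoc (Rabs C)); apply Rmult_le_compat; [|lra..].
    apply Rmult_le_pos; lra.
Qed.

Lemma F_abs_le_two_digits c C n0 n y k l :
  INR B * INR n0 + Rabs C * INR B ^ 2 <= c ->
  (forall n, (n0 <= n)%nat -> (1 <= n)%nat -> Rabs (q (n - 1)%nat / Qs q n) <= C / INR n) ->
  (1 <= n)%nat -> (0 < y k < m k)%nat -> (0 < y l < m l)%nat -> (k < l)%nat ->
  F_abs m q n y <= c * INR (Mseq m l) * INR (Mseq m k) / INR n.
Proof.
  intros Hc HC Hn Hk Hl Hkl.
  assert (Hnr : 0 < INR n) by (apply lt_0_INR; lia).
  assert (HP : 0 <= INR (Mseq m l) * INR (Mseq m k)) by (apply Rmult_le_pos; apply pos_INR).
  assert (HBn0 : 0 <= INR B * INR n0) by (apply Rmult_le_pos; apply pos_INR).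
  assert (HCB : 0 <= Rabs C * INR B ^ 2)
    by (apply Rmult_le_pos; [apply Rabs_pos|apply pow_le, pos_INR]).
  apply (Rmult_le_reg_r (INR n)); [exact Hnr|].
  replace (c * INR (Mseq m l) * INR (Mseq m k) / INR n * INR n)
    with (c * (INR (Mseq m l) * INR (Mseq m k))) by (field; lra).
  destruct (Nat.le_gt_cases n n0) as [Hsmall|Hlarge].
  - eapply Rle_trans; [apply (F_abs_mul_le_small_n n0 n y k l); auto|].
    apply Rmult_le_compat_r; lra.
  - eapply Rle_trans; [apply (F_abs_mul_le_large_n C n y k l); auto; apply HC; lia|].
    apply Rmult_le_compat_r; lra.
Qed.

End Fejer.

Fixpoint prod_m (m : nat -> nat) (j c : nat) : nat :=
  match c with O => 1%nat | S c' => (m j * prod_m m (S j) c')%nat end.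

Lemma Mseq_add_prod_m m j c : Mseq m (j + c) = (prod_m m j c * Mseq m j)%nat.
Proof.
  revert j; induction c as [|c IH]; intros j; [rewrite Nat.add_0_r; simpl; lia|].
  rewrite Nat.add_succ_r, <- Nat.add_succ_l, IH; simpl; ring.
Qed.

Lemma sumcyl_le m c : forall j g K, 0 <= K ->
  (forall t, (forall i, (i < j)%nat -> t i = 0%nat) -> g t <= K) ->
  sumcyl m j c g <= INR (prod_m m j c) * K.
Proof.
  induction c as [|c IH]; intros j g K HK Hg; simpl sumcyl; simpl prod_m.
  - rewrite Rmult_1_l; apply Hg; auto.
  - rewrite mult_INR, Rmult_assoc, <- sumR_const; apply sumR_le; intros a _.
    apply IH; [exact HK|]; intros t Ht; apply Hg; intros i Hi.
    destruct (Nat.eqb_spec i j); [lia|apply Ht; lia].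
Qed.

Lemma int_IN_le m N L f K : (forall k, (2 <= m k)%nat) -> (N <= L)%nat -> 0 <= K ->
  (forall t, (forall i, (i < N)%nat -> t i = 0%nat) -> f t <= K) ->
  int_IN m N L f <= K / INR (Mseq m N).
Proof.
  intros Hm2 HNL HK Hf; unfold int_IN.
  replace L with (N + (L - N))%nat at 1 by lia.
  rewrite Mseq_add_prod_m, mult_INR.
  pose proof (Mseq_pos m Hm2 (N + (L - N))) as HL; rewrite Mseq_add_prod_m in HL.
  assert (0 < INR (prod_m m N (L - N))) by (apply lt_0_INR; nia).
  assert (0 < INR (Mseq m N)) by (apply lt_0_INR; pose proof (Mseq_pos m Hm2 N); lia).
  apply Rle_trans
    with (/ (INR (prod_m m N (L - N)) * INR (Mseq m N)) * (INR (prod_m m N (L - N)) * K)).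
  - apply Rmult_le_compat_l; [left; apply Rinv_0_lt_compat; nra|apply sumcyl_le; auto].
  - right; field; lra.
Qed.

Lemma subG_zero_r m x t i : (x i < m i)%nat -> t i = 0%nat -> subG m x t i = x i.
Proof.
  intros Hx Ht; unfold subG; rewrite Ht, Nat.sub_0_r.
  replace (x i + m i)%nat with (x i + 1 * m i)%nat by lia.
  rewrite Nat.Div0.mod_add; apply Nat.mod_small, Hx.
Qed.

Lemma intF_le_on_coset m q N n x K : (forall k, (2 <= m k)%nat) -> inG m x -> 0 <= K ->
  (forall y, (forall i, (i < N)%nat -> y i = x i) -> F_abs m q n y <= K) ->
  intF m q N n x <= K / INR (Mseq m N).
Proof.
  intros Hm2 Hx HK HF; apply int_IN_le; [exact Hm2|lia|exact HK|].
  intros t Ht; apply HF; intros i Hi; apply subG_zero_r; auto.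
Qed.

Theorem mainTheorem6 (m : nat -> nat) (q : nat -> R)
  (Hm2 : forall k, (2 <= m k)%nat)
  (Hmb : exists B : nat, forall k, (m k <= B)%nat)
  (Hq0 : 0 < q 0%nat)
  (Hqnn : forall k, 0 <= q k)
  (Hqmon : forall k, q k <= q (S k))
  (HO : exists C : R, exists n0 : nat, forall n : nat, (n0 <= n)%nat -> (1 <= n)%nat ->
          Rabs (q (n - 1)%nat / Qs q n) <= C / INR n) :
  exists c : R, 0 < c /\
    forall N n : nat, (Mseq m N <= n)%nat ->
      (forall (k l : nat) (x : nat -> nat), inG m x ->
         (k + 2 <= N)%nat -> (k + 1 <= l)%nat -> (l + 1 <= N)%nat ->
         I_kl k l x ->
         intF m q N n x <= c * INR (Mseq m l) * INR (Mseq m k) / (INR n * INR (Mseq m N))) /\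
      (forall (k : nat) (x : nat -> nat), inG m x -> (k + 1 <= N)%nat ->
         I_kN N k x ->
         intF m q N n x <= c * INR (Mseq m k) / INR (Mseq m N)).
Proof.
  destruct Hmb as [B HB]; destruct HO as [C [n0 HC]].
  assert (HB2 : 2 <= INR B)
    by (apply (le_INR 2); specialize (Hm2 0%nat); specialize (HB 0%nat); lia).
  set (c := INR B * (1 + INR n0) + Rabs C * INR B ^ 2).
  assert (Hc : INR B <= c /\ INR B * INR n0 + Rabs C * INR B ^ 2 <= c)
    by (unfold c; pose proof (Rabs_pos C); pose proof (pow_le (INR B) 2);
        pose proof (pos_INR n0); nra).
  exists c; split; [lra|]; intros N n HNn.
  assert (Hn : (1 <= n)%nat) by (pose proof (Mseq_pos m Hm2 N); lia).
  assert (HM : forall j, 1 <= INR (Mseq m j)) by (intros j; apply (le_INR 1), Mseq_pos, Hm2).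
  assert (Hdigit : forall x y i, inG m x -> x i <> 0%nat -> y i = x i -> (0 < y i < m i)%nat)
    by (intros x y i Hx Hxi ->; split; [lia|apply Hx]).
  split.
  - intros k l x Hx HkN Hkl HlN [_ [Hxk [_ Hxl]]].
    assert (Hnr : 0 < INR n) by (apply lt_0_INR; lia).
    replace (c * INR (Mseq m l) * INR (Mseq m k) / (INR n * INR (Mseq m N)))
      with (c * INR (Mseq m l) * INR (Mseq m k) / INR n / INR (Mseq m N))
      by (field; pose proof (HM N); lra).
    apply intF_le_on_coset; auto.
    + pose proof (HM l); pose proof (HM k).
      apply Rdiv_le_0_compat; [repeat apply Rmult_le_pos|]; lra.
    + intros y Hy; apply (F_abs_le_two_digits m Hm2 q Hq0 Hqnn Hqmon B HB c C n0);
        [tauto|exact HC|exact Hn|apply (Hdigit x)|apply (Hdigit x)|lia]; auto; apply Hy; lia.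
  - intros k x Hx HkN [_ [Hxk _]].
    apply intF_le_on_coset; auto; [pose proof (HM k); nra|].
    intros y Hy; apply (F_abs_le_one_digit m Hm2 q Hq0 Hqnn B HB); [tauto|exact Hn|].
    apply (Hdigit x); auto; apply Hy; lia.
Qed.
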